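(* Let $(\mathbb{X},d,\mu)$ be a proper metric measure space satisfying the $\delta$-annular decay property for some $\delta\in(0,1]$ with constant $D_\delta\geq1$. Let $\varrho$ be a continuous admissible radius function in a bounded domain $\Omega\subset\mathbb{X}$. Then there is $C=C(D_\delta,\mu)>0$ such that for every compact $K\subset\Omega$ and all $x,y\in K$, $$\frac{\mu(B_x\triangle B_y)}{\max\{\mu(B_x),\mu(B_y)\}}\leq C\left(\frac{\widehat\omega_\varrho(d(x,y))}{\varrho_K}\right)^\delta.$$
   Context: A metric space is proper if closed bounded sets are compact. A metric measure space $(\mathbb{X},d,\mu)$ is a metric space with a positive Borel regular measure $\mu$ with $0<\mu(B)<\infty$ for every ball $B$. It satisfies the $\delta$-annular decay property if there is $D_\delta\ge1$ with $\mu(B(x,R)\setminus B(x,r))\leq D_\delta\left(\frac{R-r}{R}\right)^\delta\mu(B(x,R))$ for all $x$, $0<r\leq R$. An admissible radius function in $\Omega$ is $\varrho\in C(\overline\Omega)$, $\varrho\ge0$, with $0<\varrho(x)\leq\mathrm{dist}(x,\partial\Omega)$ for $x\in\Omega$ and $\varrho=0$ exactly on $\partial\Omega$. $\varrho_K=\inf_K\varrho$, $B_x=\overline{B}(x,\varrho(x))$, $A\triangle B=(A\setminus B)\cup(B\setminus A)$. A modulus of continuity is a nondecreasing continuous $\omega:[0,\mathrm{diam}\,\Omega]\to[0,\infty)$ with $\omega(0)=0$. Fix a concave modulus of continuity $\omega_{\varrho,\Omega}$ for $\varrho$ on $\Omega$ with $\omega_{\varrho,\Omega}(\mathrm{diam}\,\Omega)\le\mathrm{diam}\,\Omega$;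 set $\widehat\omega_\varrho(t)=t$ if $\omega_{\varrho,\Omega}(t)\le t$ for all $t\in[0,\mathrm{diam}\,\Omega]$, and otherwise $\widehat\omega_\varrho(t)=\frac{\mathrm{diam}\,\Omega}{\omega_{\varrho,\Omega}(\mathrm{diam}\,\Omega)}\omega_{\varrho,\Omega}(t)$. *)

From HB Require Import structures.
From mathcomp Require Import all_boot all_order all_algebra.
From mathcomp Require Import all_classical all_reals all_analysis.
Set Implicit Arguments. Unset Strict Implicit. Unset Printing Implicit Defensive.
Import Order.TTheory GRing.Theory Num.Theory numFieldNormedType.Exports.
Local Open Scope classical_set_scope.
Local Open Scope ring_scope.

Section MetricDefs.
Variables (X : Type) (R : realType) (d : X -> X -> R).

Definition is_metric : Prop :=
  [/\ forall x y, 0 <= d x y,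
      forall x y, d x y = 0 <-> x = y,
      forall x y, d x y = d y x &
      forall x y z, d x z <= d x y + d y z].

Definition oball (x : X) (r : R) : set X := [set y | d x y < r].
Definition cball (x : X) (r : R) : set X := [set y | d x y <= r].

Definition d_open (U : set X) : Prop :=
  forall x, U x -> exists2 r : R, 0 < r & oball x r `<=` U.
Definition d_closed (A : set X) : Prop := d_open (~` A).
Definition d_bounded (A : set X) : Prop :=
  exists x : X, exists r : R, A `<=` oball x r.
Definition d_compact (A : set X) : Prop :=
  forall (I : Type) (U : I -> set X), (forall i, d_open (U i)) ->
    A `<=` \bigcup_i U i ->
    exists F : set I, finite_set F /\ A `<=` \bigcup_(i in F) U i.
Definition d_proper : Prop :=
  forall A, d_closed A -> d_bounded A -> d_compact A.
Definition d_connected (A : set X) : Prop :=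
  forall U V, d_open U -> d_open V -> A `<=` U `|` V ->
    A `&` U `&` V = set0 -> A `&` U = set0 \/ A `&` V = set0.
Definition d_domain (O : set X) : Prop :=
  [/\ O !=set0, d_open O & d_connected O].

Definition d_closure (A : set X) : set X :=
  [set x | forall r : R, 0 < r -> exists2 y, A y & d x y < r].
Definition d_interior (A : set X) : set X :=
  [set x | exists2 r : R, 0 < r & oball x r `<=` A].
Definition d_boundary (A : set X) : set X := d_closure A `\` d_interior A.

(* distance to a set, in extended reals (+oo for the empty set) *)
Definition d_dist (x : X) (A : set X) : \bar R :=
  ereal_inf [set (d x y)%:E | y in A].

Definition d_diam (A : set X) : R := sup [set d x y | x in A & y in A].

Definition d_continuous_on (A : set X) (f : X -> R) : Prop :=
  forall x, A x -> forall e : R, 0 < e -> exists2 del : R, 0 < del &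
    forall y, A y -> d x y < del -> `|f x - f y| < e.

Definition admissible_radius (O : set X) (rho : X -> R) : Prop :=
  [/\ d_continuous_on (d_closure O) rho,
      forall x, d_closure O x -> 0 <= rho x,
      forall x, O x -> 0 < rho x /\ ((rho x)%:E <= d_dist x (d_boundary O))%E &
      forall x, d_closure O x -> (rho x = 0 <-> d_boundary O x)].

Definition inf_on (K : set X) (rho : X -> R) : R := inf [set rho x | x in K].

End MetricDefs.

Definition symdiff (T : Type) (A B : set T) : set T := (A `\` B) `|` (B `\` A).

Section Modulus.
Variable R : realType.

Definition modulus_of_continuity (D : R) (w : R -> R) : Prop :=
  [/\ {in `[0, D] &, {homo w : s t / s <= t}},
      {within [set t : R | 0 <= t <= D], continuous w},
      forall t, 0 <= t <= D -> 0 <= w t &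
      w 0 = 0].

Definition concave_on (D : R) (w : R -> R) : Prop :=
  forall s t l, 0 <= s <= D -> 0 <= t <= D -> 0 <= l <= 1 ->
    l * w s + (1 - l) * w t <= w (l * s + (1 - l) * t).

Definition omega_hat (D : R) (w : R -> R) (t : R) : R :=
  if `[< forall s, 0 <= s <= D -> w s <= s >] then t
  else D / w D * w t.

End Modulus.

Definition modulus_for (X : Type) (R : realType) (d : X -> X -> R)
  (O : set X) (rho : X -> R) (w : R -> R) : Prop :=
  forall x y, O x -> O y -> `|rho x - rho y| <= w (d x y).

(* Let t := omega_hat (d x y) / rho_K, where rho_K > 0 by compactness of K. Concavity of
   w and the normalisation of omega_hat give d x y <= omega_hat (d x y) and
   |rho x - rho y| <= w (d x y) <= omega_hat (d x y), so both are at most t rho_K.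
   If Dd t^delta <= 1/2, then B_x \ B_y lies in the annulus around x between the radii
   min(rho y - d x y, rho x (1 + t)) and rho x (1 + t), of relative width at most 3t.
   Annular decay bounds its measure by Dd (3t)^delta mu(B(x, rho x (1 + t))), and a second
   use of annular decay shows that this ball has at most twice the mass of B_x.
   If Dd t^delta > 1/2, the ratio is at most 2 anyway. Hence C = 12 Dd works. *)

From HB Require Import structures.
From mathcomp Require Import all_boot all_order all_algebra.
From mathcomp Require Import all_classical all_reals all_analysis.
From mathcomp Require Import ring lra.
Set Implicit Arguments. Unset Strict Implicit. Unset Printing Implicit Defensive.
Import Order.TTheory GRing.Theory Num.Theory numFieldNormedType.Exports.
Local Open Scope classical_set_scope.
Local Open Scope ring_scope.

Lemma finite_nat_ubound (F : set nat) : finite_set F ->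
  exists N, forall i, F i -> (i <= N)%N.
Proof.
move=> fF; exists (\max_(i <- finmap.enum_fset (fset_set F)) i)%N => i Fi.
by apply: (@leq_bigmax_seq _ _ xpredT id); rewrite // in_fset_set // inE.
Qed.

Lemma ge0_fine_le (R : realDomainType) (x : \bar R) (c : R) :
  (0 <= x)%E -> (x <= c%:E)%E -> fine x <= c.
Proof.
move=> x0 xc; rewrite -lee_fin fineK //.
by rewrite ge0_fin_numE ?(le_lt_trans xc) ?ltry.
Qed.

Lemma powR_mul_le (R : realType) (c t p : R) : 1 <= c -> 0 <= t -> p <= 1 ->
  (c * t) `^ p <= c * t `^ p.
Proof.
move=> c1 t0 p1; rewrite powRM ?(le_trans ler01 c1) //.
by rewrite ler_wpM2r ?powR_ge0 ?ler1_powR.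
Qed.

Section Metric.
Variables (X : Type) (R : realType) (d : X -> X -> R).
Hypothesis d_metric : is_metric d.

Lemma d_ge0 x y : 0 <= d x y. Proof. by case: d_metric. Qed.
Lemma d_sym x y : d x y = d y x. Proof. by case: d_metric. Qed.
Lemma d_triangle x y z : d x z <= d x y + d y z. Proof. by case: d_metric. Qed.
Lemma d_xx x : d x x = 0. Proof. by case: d_metric => _ /(_ x x) [_ ->]. Qed.

Lemma d_gt0 x y : x <> y -> 0 < d x y.
Proof.
move=> xy; rewrite lt_def d_ge0 andbT; apply/eqP => dxy.
by case: d_metric => _ /(_ x y) [/(_ dxy)].
Qed.

Lemma d_open_oball x r : d_open d (oball d x r).
Proof.
move=> z; rewrite /oball /= => xz; exists (r - d x z); first by rewrite subr_gt0.
move=> y; rewrite /oball /= => zy; have := d_triangle x z y; lra.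
Qed.

Lemma d_open_setC_cball x r : d_open d (~` cball d x r).
Proof.
move=> z; rewrite /cball /= => /negP; rewrite -ltNge => xz.
exists (d x z - r); first by rewrite subr_gt0.
move=> y; rewrite /oball /cball /= => zy; apply/negP; rewrite -ltNge.
have := d_triangle x y z; rewrite (d_sym y z); lra.
Qed.

Lemma d_closure_sub (A : set X) : A `<=` d_closure d A.
Proof. by move=> z Az r r0; exists z => //; rewrite d_xx. Qed.

Lemma d_continuous_on_sub (A B : set X) (f : X -> R) :
  A `<=` B -> d_continuous_on d B f -> d_continuous_on d A f.
Proof.
move=> AB cf x Ax e e0; have [del del0 hdel] := cf x (AB x Ax) e e0.
by exists del => // y Ay; apply: hdel; apply: AB.
Qed.

Lemma d_le_diam (A : set X) x y : d_bounded d A -> A x -> A y ->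
  d x y <= d_diam d A.
Proof.
move=> [z [r Azr]] Ax Ay; apply: ub_le_sup; last by exists x => //; exists y.
exists (r + r) => _ [a Aa [b Ab <-]].
have := Azr a Aa; have := Azr b Ab; rewrite /oball /=.
have := d_triangle a z b; rewrite (d_sym a z); lra.
Qed.

Lemma inf_on_le (K : set X) (f : X -> R) x :
  (forall z, K z -> 0 <= f z) -> K x -> inf_on K f <= f x.
Proof.
by move=> f0 Kx; apply: ge_inf; [exists 0 => _ [z Kz <-]; exact: f0 | exists x].
Qed.

(* The open sets [A /\ f > 1/(n+1)] cover [K]; a finite subcover bounds [f] below on [K]. *)
Lemma inf_on_gt0 (A K : set X) (f : X -> R) :
  d_open d A -> d_continuous_on d A f -> (forall z, A z -> 0 < f z) ->
  d_compact d K -> K `<=` A -> K !=set0 -> 0 < inf_on K f.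
Proof.
move=> oA cf f0 cK KA K0.
pose U (n : nat) := [set z | A z /\ n.+1%:R^-1 < f z].
have oU n : d_open d (U n).
  move=> z [Az fz]; have e0 : 0 < f z - n.+1%:R^-1 by rewrite subr_gt0.
  have [del del0 hdel] := cf z Az _ e0; have [r r0 zrA] := oA z Az.
  exists (Num.min del r); first by rewrite lt_min del0 r0.
  move=> y; rewrite /oball /= lt_min => /andP[zy1 zy2].
  have Ay : A y by apply: zrA.
  split => //; move: (hdel y Ay zy1); rewrite ltr_norml => /andP[_].
  set c := n.+1%:R^-1; lra.
have KU : K `<=` \bigcup_n U n.
  move=> z Kz; have [k] := ltr_add_invr (f0 z (KA z Kz)).
  by rewrite add0r => fz; exists k => //; split => //; apply: KA.
have [F [fF KF]] := cK nat U oU KU.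
have [N FN] := finite_nat_ubound fF.
apply: (@lt_le_trans _ _ N.+1%:R^-1); first by rewrite invr_gt0.
apply: lb_le_inf; first by case: K0 => z Kz; exists (f z), z.
move=> _ [z /KF [i Fi [_ fz]] <-]; apply/ltW/(le_lt_trans _ fz).
by rewrite lef_pV2 ?posrE // ler_nat ltnS FN.
Qed.

End Metric.

Section Modulus.
Variables (R : realType) (D : R) (w : R -> R).
Hypotheses (w_mod : modulus_of_continuity D w) (w_conc : concave_on D w).
Hypothesis wD_le : w D <= D.

Lemma concave_chord_le r : 0 < D -> 0 <= r <= D -> r / D * w D <= w r.
Proof.
case: w_mod => _ _ _ w0 D0 /andP[r0 rD].
have l01 : 0 <= r / D <= 1 by rewrite divr_ge0 ?(ltW D0) //= ler_pdivrMr ?mul1r.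
have hD : 0 <= D <= D by rewrite lexx ltW.
have h0 : 0 <= (0 : R) <= D by rewrite lexx ltW.
have := w_conc hD h0 l01.
by rewrite w0 !mulr0 !addr0 divfK ?gt_eqF.
Qed.

Lemma modulus_top_gt0 : ~ (forall s, 0 <= s <= D -> w s <= s) -> 0 < w D.
Proof.
case: w_mod => w_homo _ _ _ /existsNP[s /not_implyP[/[dup] s_itv /andP[s0 sD]]].
move/negP; rewrite -ltNge => ws.
have wsD : w s <= w D by apply: w_homo; rewrite ?in_itv //= lexx (le_trans s0 sD).
by rewrite (le_lt_trans s0 (lt_le_trans ws wsD)).
Qed.

Lemma le_omega_hat r : 0 <= r <= D -> r <= omega_hat D w r.
Proof.
rewrite /omega_hat => hr; case: asboolP => // /modulus_top_gt0 wD0.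
have D0 : 0 < D := lt_le_trans wD0 wD_le.
have e : D / w D * (r / D * w D) = r by field; rewrite !gt_eqF.
by rewrite -{1}e ler_wpM2l ?concave_chord_le // divr_ge0 // ltW.
Qed.

Lemma modulus_le_omega_hat r : 0 <= r <= D -> w r <= omega_hat D w r.
Proof.
rewrite /omega_hat => hr; case: asboolP => [-> // | /modulus_top_gt0 wD0].
have [_ _ w_ge0 _] := w_mod.
by rewrite ler_peMl ?w_ge0 // ler_pdivlMr // mul1r.
Qed.

End Modulus.

Section AnnularDecay.
Variables (dsp : measure_display) (X : measurableType dsp) (R : realType)
  (d : X -> X -> R) (mu : {measure set X -> \bar R}) (delta Dd : R).
Hypothesis d_metric : is_metric d.
Hypothesis open_measurable : forall U, d_open d U -> measurable U.
Hypothesis mu_oball : forall x r, 0 < r -> (0 < mu (oball d x r) < +oo)%E.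
Hypothesis mu_cball : forall x r, 0 < r -> (0 < mu (cball d x r) < +oo)%E.
Hypotheses (delta_gt0 : 0 < delta) (delta_le1 : delta <= 1) (Dd_ge1 : 1 <= Dd).
Hypothesis annular_decay : forall x r Rr, 0 < r -> r <= Rr ->
  (mu (oball d x Rr `\` oball d x r)
     <= (Dd * ((Rr - r) / Rr) `^ delta)%:E * mu (oball d x Rr))%E.

Lemma measurable_oball x r : measurable (oball d x r).
Proof. exact/open_measurable/d_open_oball. Qed.

Lemma measurable_cball x r : measurable (cball d x r).
Proof.
by rewrite -[cball _ _ _]setCK; apply/measurableC/open_measurable/d_open_setC_cball.
Qed.

Lemma mu_oball_fin x r : 0 < r -> mu (oball d x r) \is a fin_num.
Proof. by move/(mu_oball x)/andP => [/ltW mu0 ?]; rewrite ge0_fin_numE. Qed.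

Lemma annular_decay_le x r Rr q : 0 < r <= Rr -> (Rr - r) / Rr <= q ->
  (mu (oball d x Rr `\` oball d x r)
     <= (Dd * q `^ delta)%:E * mu (oball d x Rr))%E.
Proof.
move=> /andP[r0 rR] rq; apply: le_trans (annular_decay x r0 rR) _.
apply: lee_wpmul2r => //; rewrite lee_fin ler_wpM2l ?(le_trans ler01) //.
apply: ge0_ler_powR; rewrite ?nnegrE ?(ltW delta_gt0) //.
  by rewrite divr_ge0 ?subr_ge0 // (le_trans (ltW r0)).
by rewrite (le_trans _ rq) // divr_ge0 ?subr_ge0 // (le_trans (ltW r0)).
Qed.

Lemma oball_doubling x a a' q : 0 < a <= a' -> (a' - a) / a' <= q ->
  Dd * q `^ delta <= 1 / 2 ->
  (mu (oball d x a') <= 2%:E * mu (oball d x a))%E.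
Proof.
move=> /[dup] aa'_itv /andP[a0 aa'] aq small; have a'0 := lt_le_trans a0 aa'.
set Oa := oball d x a; set Oa' := oball d x a'.
have fin_a := mu_oball_fin x a0; have fin_a' := mu_oball_fin x a'0.
have mu_split : mu Oa' = (mu (Oa' `\` Oa) + mu Oa)%E.
  rewrite (measureDI mu (measurable_oball x a') (measurable_oball x a)) setIidr //.
  by move=> z; rewrite /Oa /Oa' /oball /= => xz; apply: lt_le_trans xz aa'.
have : fine (mu Oa') <= Dd * q `^ delta * fine (mu Oa') + fine (mu Oa).
  rewrite -lee_fin EFinD EFinM !fineK // {1}mu_split leeD //.
  exact: annular_decay_le.
have M'0 : 0 <= fine (mu Oa') by rewrite fine_ge0.
have := ler_wpM2r M'0 small.
rewrite -(fineK fin_a') -(fineK fin_a) -EFinM lee_fin; lra.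
Qed.

Lemma mu_cball_fin x r : 0 < r -> mu (cball d x r) \is a fin_num.
Proof. by move/(mu_cball x)/andP => [/ltW mu0 ?]; rewrite ge0_fin_numE. Qed.

Lemma cball_diff_le_small x y a b t : 0 < a -> 0 < t -> Dd * t `^ delta <= 1 / 2 ->
  d x y < b -> a - b + d x y <= 2 * t * a ->
  (mu (cball d x a `\` cball d y b) <= (6 * Dd * t `^ delta)%:E * mu (cball d x a))%E.
Proof.
move=> a0 t0 small xyb ab.
pose a' := a * (1 + t); pose s := Num.min (b - d x y) a'.
have aa' : a < a' by rewrite /a' mulrDr mulr1 ltrDl mulr_gt0.
have s0 : 0 < s by rewrite lt_min subr_gt0 xyb (lt_trans a0 aa').
have sa' : s <= a' by rewrite ge_min lexx orbT.
have sub : cball d x a `\` cball d y b `<=` oball d x a' `\` oball d x s.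
  move=> z []; rewrite /cball /oball /= => xz yz; split; first exact: le_lt_trans xz aa'.
  rewrite lt_min => /andP[xzs _]; apply: yz.
  by have := d_triangle d_metric y x z; rewrite (d_sym d_metric y x); lra.
have width_s : (a' - s) / a' <= 3 * t.
  rewrite ler_pdivrMr ?(lt_trans a0 aa') //.
  suff : a' - 3 * t * a' <= s by lra.
  by rewrite le_min; apply/andP; split; rewrite /a'; nra.
have width_a : (a' - a) / a' <= t.
  by rewrite ler_pdivrMr ?(lt_trans a0 aa') // /a'; nra.
have oball_cball : (mu (oball d x a) <= mu (cball d x a))%E.
  apply: le_measure; rewrite ?inE; [exact: measurable_oball | exact: measurable_cball |].
  by move=> z /ltW.
have dbl : (mu (oball d x a') <= 2%:E * mu (cball d x a))%E.
  apply: le_trans (oball_doubling _ _ width_a small) (lee_wpmul2l _ oball_cball) => //.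
  by rewrite a0 ltW.
apply: (@le_trans _ _ (mu (oball d x a' `\` oball d x s))).
  by apply: le_measure; rewrite ?inE //; apply: measurableD;
    (exact: measurable_oball || exact: measurable_cball).
apply: le_trans (annular_decay_le _ _ width_s) _; first by rewrite s0.
apply: le_trans (lee_wpmul2l _ dbl) _.
  by rewrite lee_fin mulr_ge0 ?powR_ge0 ?(le_trans ler01).
rewrite muleA -EFinM lee_wpmul2r // lee_fin.
have : (3 * t) `^ delta <= 3 * t `^ delta.
  by apply: powR_mul_le => //; [rewrite ler1n | exact: ltW].
have : 0 <= Dd := le_trans ler01 Dd_ge1; nra.
Qed.

Lemma cball_diff_le x y a b m t : 0 < m -> m <= a -> m <= b -> 0 < t ->
  d x y <= t * m -> a - b <= t * m ->
  (mu (cball d x a `\` cball d y b) <= (6 * Dd * t `^ delta)%:E * mu (cball d x a))%E.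
Proof.
move=> m0 ma mb t0 xym abm; have a0 := lt_le_trans m0 ma.
have [small | big] := lerP (Dd * t `^ delta) (1 / 2).
  have t1 : t < 1.
    rewrite ltNge; apply/negP => t1; move: small; apply/negP; rewrite -ltNge.
    have : 1 `^ delta <= t `^ delta.
      by rewrite ge0_ler_powR ?nnegrE ?(ltW delta_gt0) ?(le_trans ler01).
    rewrite powR1.
    have := Dd_ge1; nra.
  apply: cball_diff_le_small => //; nra.
apply: (@le_trans _ _ (mu (cball d x a))).
  apply: le_measure; rewrite ?inE; last by move=> z [].
    by apply: measurableD; exact: measurable_cball.
  exact: measurable_cball.
by rewrite lee_pemull // lee_fin; have := Dd_ge1; nra.
Qed.

Lemma symdiff_cball_le x y a b m t : 0 < m -> m <= a -> m <= b -> 0 < t ->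
  d x y <= t * m -> `|a - b| <= t * m ->
  fine (mu (symdiff (cball d x a) (cball d y b)))
    <= 12 * Dd * t `^ delta
       * Num.max (fine (mu (cball d x a))) (fine (mu (cball d y b))).
Proof.
move=> m0 ma mb t0 xym abm.
have fin_a := mu_cball_fin x (lt_le_trans m0 ma).
have fin_b := mu_cball_fin y (lt_le_trans m0 mb).
have diff_a := cball_diff_le m0 ma mb t0 xym (le_trans (ler_norm _) abm).
rewrite distrC in abm; rewrite d_sym // in xym.
have diff_b := cball_diff_le m0 mb ma t0 xym (le_trans (ler_norm _) abm).
apply: ge0_fine_le; first exact: measure_ge0.
apply: le_trans (measureU2 _ _ _) _; try by apply: measurableD; exact: measurable_cball.
apply: le_trans (leeD diff_a diff_b) _.
rewrite -(fineK fin_a) -(fineK fin_b) -!EFinM -EFinD lee_fin.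
have : 0 <= Dd * t `^ delta by rewrite mulr_ge0 ?powR_ge0 ?(le_trans ler01).
set Ma := fine (mu (cball d x a)); set Mb := fine (mu (cball d y b)).
have : Ma <= Num.max Ma Mb by rewrite le_max lexx.
have : Mb <= Num.max Ma Mb by rewrite le_max lexx orbT.
nra.
Qed.

End AnnularDecay.

Theorem lemma3p8 (dsp : measure_display) (X : measurableType dsp) (R : realType)
  (d : X -> X -> R) (mu : {measure set X -> \bar R}) (delta Dd : R) :
  is_metric d ->
  d_proper d ->
  (* Borel measure: open sets are measurable *)
  (forall U, d_open d U -> measurable U) ->
  (* Borel regularity *)
  (forall A, measurable A -> exists B,
      smallest (sigma_algebra setT) (d_open d) B /\ A `<=` B /\ mu A = mu B) ->
  (* balls have positive finite measure *)
  (forall x r, 0 < r -> (0 < mu (oball d x r) < +oo)%E) ->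
  (forall x r, 0 < r -> (0 < mu (cball d x r) < +oo)%E) ->
  (* delta-annular decay *)
  0 < delta <= 1 -> 1 <= Dd ->
  (forall x r Rr, 0 < r -> r <= Rr ->
     (mu (oball d x Rr `\` oball d x r)
       <= (Dd * ((Rr - r) / Rr) `^ delta)%:E * mu (oball d x Rr))%E) ->
  exists2 C : R, 0 < C &
  forall (Omega : set X) (rho : X -> R) (w : R -> R),
    d_domain d Omega -> d_bounded d Omega ->
    admissible_radius d Omega rho ->
    modulus_of_continuity (d_diam d Omega) w ->
    concave_on (d_diam d Omega) w ->
    modulus_for d Omega rho w ->
    w (d_diam d Omega) <= d_diam d Omega ->
    forall K : set X, d_compact d K -> K `<=` Omega ->
    forall x y, K x -> K y ->
      fine (mu (symdiff (cball d x (rho x)) (cball d y (rho y))))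
        / Num.max (fine (mu (cball d x (rho x)))) (fine (mu (cball d y (rho y))))
      <= C * (omega_hat (d_diam d Omega) w (d x y) / inf_on K rho) `^ delta.
Proof.
move=> d_metric _ open_measurable _ mu_oball mu_cball /andP[delta_gt0 delta_le1]
  Dd_ge1 annular_decay.
exists (12 * Dd); first lra.
move=> Omega rho w [_ Omega_open _] Omega_bdd [rho_cont _ rho_pos _] w_mod w_conc
  w_rho wD_le K K_cpt KOmega x y Kx Ky.
have rho_gt0 z : Omega z -> 0 < rho z by case/rho_pos.
have rK_gt0 : 0 < inf_on K rho.
  apply: inf_on_gt0 Omega_open _ rho_gt0 K_cpt KOmega _; last by exists x.
  exact: d_continuous_on_sub (d_closure_sub d_metric (A := Omega)) rho_cont.
have rK_le z : K z -> inf_on K rho <= rho z.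
  by apply: inf_on_le => // u Ku; exact/ltW/rho_gt0/KOmega.
have [<- | xy] := pselect (x = y).
  rewrite /symdiff setDv setU0 measure0 mul0r.
  by apply: mulr_ge0; [lra | exact: powR_ge0].
have xy_itv : 0 <= d x y <= d_diam d Omega.
  by rewrite d_ge0 // d_le_diam //; exact: KOmega.
set om := omega_hat _ w (d x y).
have xy_om : d x y <= om := le_omega_hat w_mod w_conc wD_le xy_itv.
have rho_om : `|rho x - rho y| <= om.
  apply: le_trans (w_rho x y (KOmega x Kx) (KOmega y Ky)) _.
  exact: modulus_le_omega_hat.
have om_gt0 : 0 < om := lt_le_trans (d_gt0 d_metric xy) xy_om.
have om_eq : om = om / inf_on K rho * inf_on K rho by rewrite divfK ?gt_eqF.
rewrite ler_pdivrMr; last first.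
  by rewrite lt_max fine_gt0 // mu_cball // rho_gt0 //; exact: KOmega.
apply: symdiff_cball_le (rK_le x Kx) (rK_le y Ky) _ _ _ => //.
- by rewrite divr_gt0.
- by rewrite -om_eq.
- by rewrite -om_eq.
Qed.
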